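(* Let $(X,d)$ be a complete metric space, let $T:X\to P(X)$ be a multivalued operator with $SFix(T)=\{x^*\}$, and let $T_G(x)=\{G(x,u):u\in T(x)\}$ be an admissible perturbation of $T$ corresponding to a mapping $G:X\times X\to X$ satisfying $G(x,x)=x$ for all $x$ and ($G(x,y)=x\Rightarrow y=x$). Let $F:X\to P(X)$ be a multivalued operator with $SFix(F)\neq\emptyset$. Suppose: 1) $T_G$ is a $\Psi$-MP operator with $SFix(T_G)=\{x^*\}$; 2) there is $c>0$ with $D(x,T_G(x))\le c\,D(x,T(x))$ for all $x\in X$; 3) there is $\eta>0$ with $H(T(x),F(x))\le\eta$ for all $x\in X$. Then (i) $d(x,x^* )\le\Psi(c\,D(x,T(x)))$ for all $x\in X$, and (ii) $d(x^*,y^* )\le\Psi(c\eta)$ for all $y^*\in SFix(F)$.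
   Context: $P(X)$ is the family of nonempty subsets of $X$; $Fix(S)=\{x:x\in S(x)\}$, $SFix(S)=\{x:S(x)=\{x\}\}$. For nonempty $A,B\subseteq X$: $D(a,B)=\inf_{b\in B}d(a,b)$, $e(A,B)=\sup_{a\in A}D(a,B)$, $H(A,B)=\max\{e(A,B),e(B,A)\}$. A multivalued operator $S:X\to P(X)$ is a multivalued Picard operator if $SFix(S)=Fix(S)=\{x^*\}$ and $H(S^n(x),\{x^*\})\to0$ for each $x\in X$ (with $S^0(x)=\{x\}$, $S^n(x)=\bigcup_{y\in S^{n-1}(x)}S(y)$). Given an increasing function $\Psi:\mathbb R_+\to\mathbb R_+$, continuous at $0$ with $\Psi(0)=0$, $S$ is a $\Psi$-MP operator if it is a multivalued Picard operator with unique strict fixed point $x^*$ and $d(x,x^* )\le\Psi(D(x,S(x)))$ for all $x\in X$. *)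

From Stdlib Require Import Reals.
From Coquelicot Require Import Coquelicot.
Open Scope R_scope.

Section Defs.
Context {X : Type} (d : X -> X -> R).

Definition is_metric : Prop :=
  (forall x y, 0 <= d x y) /\ (forall x y, d x y = 0 <-> x = y) /\
  (forall x y, d x y = d y x) /\ (forall x y z, d x z <= d x y + d y z).

Definition complete : Prop :=
  forall u : nat -> X,
    (forall eps, 0 < eps -> exists N, forall m n, (N <= m)%nat -> (N <= n)%nat -> d (u m) (u n) < eps) ->
    exists l, forall eps, 0 < eps -> exists N, forall n, (N <= n)%nat -> d (u n) l < eps.

Definition nonempty (A : X -> Prop) : Prop := exists x, A x.
Definition multival (S : X -> X -> Prop) : Prop := forall x, nonempty (S x).

Definition singleton (a : X) : X -> Prop := fun x => x = a.

Definition Fix (S : X -> X -> Prop) : X -> Prop := fun x => S x x.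
Definition SFix (S : X -> X -> Prop) : X -> Prop :=
  fun x => forall y, S x y <-> y = x.

Fixpoint iterS (Op : X -> X -> Prop) (n : nat) (x : X) : X -> Prop :=
  match n with
  | O => singleton x
  | Datatypes.S n' => fun z => exists y, iterS Op n' x y /\ Op y z
  end.

(* D(a,B) = inf_{b in B} d(a,b)  (finite for nonempty B, since d >= 0) *)
Definition Dist (a : X) (B : X -> Prop) : R :=
  real (Glb_Rbar (fun r => exists b, B b /\ r = d a b)).

Definition exc (A B : X -> Prop) : Rbar :=
  Lub_Rbar (fun r => exists a, A a /\ r = Dist a B).

Definition Rbar_max2 (x y : Rbar) : Rbar :=
  if Rbar_le_dec x y then y else x.

Definition Hd (A B : X -> Prop) : Rbar := Rbar_max2 (exc A B) (exc B A).

Definition MP_operator (S : X -> X -> Prop) (xs : X) : Prop :=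
  (forall x, SFix S x <-> x = xs) /\ (forall x, Fix S x <-> x = xs) /\
  (forall x eps, 0 < eps -> exists N, forall n, (N <= n)%nat ->
       Rbar_le (Hd (iterS S n x) (singleton xs)) (Finite eps)).

Definition comparison_Psi (Psi : R -> R) : Prop :=
  (forall t, 0 <= t -> 0 <= Psi t) /\
  (forall s t, 0 <= s -> s <= t -> Psi s <= Psi t) /\
  Psi 0 = 0 /\
  (forall eps, 0 < eps -> exists delta, 0 < delta /\
       forall t, 0 <= t < delta -> Rabs (Psi t - Psi 0) < eps).

Definition Psi_MP (Psi : R -> R) (S : X -> X -> Prop) (xs : X) : Prop :=
  MP_operator S xs /\ (forall x, d x xs <= Psi (Dist x (S x))).

End Defs.

Definition perturb {X : Type} (T : X -> X -> Prop) (G : X -> X -> X) : X -> X -> Prop :=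
  fun x z => exists u, T x u /\ z = G x u.

Definition admissible {X : Type} (G : X -> X -> X) : Prop :=
  (forall x, G x x = x) /\ (forall x y, G x y = x -> y = x).

(* Part (i) is the Psi-MP estimate for T_G combined with D(x, T_G x) <= c D(x, T x)
   and the monotonicity of Psi.  For (ii), a strict fixed point ys of F lies in F(ys),
   so D(ys, T ys) <= e(F ys, T ys) <= H(T ys, F ys) <= eta, and (i) at ys gives the bound. *)
From Stdlib Require Import Reals Lra.
From Coquelicot Require Import Coquelicot.
Open Scope R_scope.

Lemma Rbar_max2_ge_r (x y : Rbar) : Rbar_le y (Rbar_max2 x y).
Proof.
  unfold Rbar_max2. destruct (Rbar_le_dec x y) as [_ | Hxy].
  - apply Rbar_le_refl.
  - apply Rbar_lt_le, Rbar_not_le_lt, Hxy.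
Qed.

Lemma SFix_mem (X : Type) (S : X -> X -> Prop) (x : X) : SFix S x -> S x x.
Proof. intros Hx. apply Hx. reflexivity. Qed.

Section Distances.
Context {X : Type} (d : X -> X -> R).
Hypothesis d_ge0 : forall x y, 0 <= d x y.

Lemma Dist_ge0 (a : X) (B : X -> Prop) : 0 <= Dist d a B.
Proof.
  unfold Dist.
  assert (Hglb : Rbar_le (Finite 0) (Glb_Rbar (fun r => exists b, B b /\ r = d a b))).
  { apply Glb_Rbar_correct. intros r [b [_ ->]]. apply d_ge0. }
  destruct (Glb_Rbar _); simpl in *; lra.
Qed.

End Distances.

Section Hausdorff.
Context {X : Type} (d : X -> X -> R).

Lemma Dist_le_exc (A B : X -> Prop) (a : X) :
  A a -> Rbar_le (Dist d a B) (exc d A B).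
Proof. intros Ha. apply Lub_Rbar_correct. exists a. split; [exact Ha | reflexivity]. Qed.

Lemma Dist_le_Hd (A B : X -> Prop) (a : X) :
  A a -> Rbar_le (Dist d a B) (Hd d B A).
Proof.
  intros Ha. eapply Rbar_le_trans; [apply (Dist_le_exc _ _ _ Ha) |].
  apply Rbar_max2_ge_r.
Qed.

Lemma Dist_le_of_Hd_le (A B : X -> Prop) (a : X) (eta : R) :
  A a -> Rbar_le (Hd d B A) eta -> Dist d a B <= eta.
Proof.
  intros Ha Heta. exact (Rbar_le_trans _ _ _ (Dist_le_Hd _ _ _ Ha) Heta).
Qed.

End Hausdorff.

Theorem mainTheorem4 (X : Type) (d : X -> X -> R)
  (Hmet : is_metric d) (Hcomp : complete d)
  (T F : X -> X -> Prop) (HT : multival T) (HF : multival F)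
  (G : X -> X -> X) (HG : admissible G)
  (xs : X) (HsfixT : forall x, SFix T x <-> x = xs)
  (HsfixF : exists y, SFix F y)
  (Psi : R -> R) (HPsi : comparison_Psi Psi)
  (H1 : Psi_MP d Psi (perturb T G) xs)
  (c : R) (Hc : 0 < c)
  (H2 : forall x, Dist d x (perturb T G x) <= c * Dist d x (T x))
  (eta : R) (Heta : 0 < eta)
  (H3 : forall x, Rbar_le (Hd d (T x) (F x)) (Finite eta)) :
  (forall x, d x xs <= Psi (c * Dist d x (T x))) /\
  (forall ys, SFix F ys -> d xs ys <= Psi (c * eta)).
Proof.
  destruct Hmet as [d_ge0 [_ [d_sym _]]].
  destruct HPsi as [_ [Psi_mon _]].
  assert (Hi : forall x, d x xs <= Psi (c * Dist d x (T x))).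
  { intros x. eapply Rle_trans; [apply (proj2 H1) |].
    apply Psi_mon; [apply Dist_ge0, d_ge0 | apply H2]. }
  split; [exact Hi |].
  intros ys Hys.
  assert (HDys : Dist d ys (T ys) <= eta)
    by exact (Dist_le_of_Hd_le d _ _ _ _ (SFix_mem _ _ _ Hys) (H3 ys)).
  rewrite d_sym. eapply Rle_trans; [apply Hi |].
  apply Psi_mon.
  - apply Rmult_le_pos; [lra | apply Dist_ge0, d_ge0].
  - apply Rmult_le_compat_l; lra.
Qed.
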